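(* Let $d\in\mathbb{N}$, $\kappa\in(0,\infty)$, and let $\mathfrak{l}\colon\mathbb{R}^d\times\mathbb{R}^d\to\mathbb{R}$ satisfy $\mathfrak{l}(\theta,\vartheta)=\frac{\kappa}{2}\|\theta-\vartheta\|^2$ for all $\theta,\vartheta\in\mathbb{R}^d$. Let $(\Omega,\mathcal{F},\mathbb{P})$ be a probability space, let $X_{n,m}\colon\Omega\to\mathbb{R}^d$, $n,m\in\mathbb{Z}$, be i.i.d. random variables with $\sup_{n,m\in\mathbb{Z}}\|X_{n,m}(\omega)\|<\infty$ for every $\omega\in\Omega$, let $M\in\mathbb{N}$, $\gamma\in(0,2/\kappa)$, let $\Theta\colon\mathbb{N}_0\times\Omega\to\mathbb{R}^d$ satisfy for all $n\in\mathbb{N}$ $$\Theta_n=\Theta_{n-1}-\frac{\gamma}{M}\Big[\sum_{m=1}^M(\nabla_\theta\mathfrak{l})(\Theta_{n-1},X_{n,m})\Big],$$ and let $k\in\mathbb{Z}$ satisfy $$\Theta_0=\sum_{n=0}^\infty\frac{\kappa\gamma(1-\kappa\gamma)^n}{M}\Big[\sum_{m=k+1}^{k+M}X_{-n,m}\Big].$$ Then $$\sup_{n\in\mathbb{N}_0}\|\Theta_n\|\le\frac{2}{2-\kappa\gamma}\Big[\sup_{v,w\in\mathbb{Z}}\|X_{v,w}\|\Big].$$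
   Context: $\|\cdot\|$ is the Euclidean norm; $\nabla_\theta\mathfrak{l}$ is the gradient in the first argument. *)

From HB Require Import structures.
From mathcomp Require Import all_boot all_order all_algebra.
From mathcomp Require Import all_classical all_reals all_analysis.
Set Implicit Arguments. Unset Strict Implicit. Unset Printing Implicit Defensive.
Import Order.TTheory GRing.Theory Num.Theory.
Import numFieldNormedType.Exports.
Local Open Scope classical_set_scope.
Local Open Scope ring_scope.

(* Euclidean norm on R^d = 'rV[R]_d (the library norm on matrices is the sup norm). *)
Definition enorm (R : realType) (d : nat) (v : 'rV[R]_d) : R :=
  Num.sqrt (\sum_(i < d) v 0 i ^+ 2).

Definition gradient (R : realType) (d : nat) (f : 'rV[R]_d -> R) (x : 'rV[R]_d)
  : 'rV[R]_d := \row_(i < d) derive f x (delta_mx 0 i).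

Definition grad1 (R : realType) (d : nat) (l : 'rV[R]_d -> 'rV[R]_d -> R)
  (theta vartheta : 'rV[R]_d) : 'rV[R]_d :=
  gradient (fun t => l t vartheta) theta.

(* Borel sigma-algebra on R^d: generated by products of Borel sets of R. *)
Definition rV_boxes (R : realType) (d : nat) : set (set 'rV[R]_d) :=
  [set B | exists (A : 'I_d -> set R),
      (forall i, measurable (A i)) /\ B = [set v : 'rV[R]_d | forall i, A i (v 0 i)]].

Definition rV_borel (R : realType) (d : nat) : set (set 'rV[R]_d) :=
  smallest (sigma_algebra setT) (@rV_boxes R d).

Definition rV_random_variable (dO : measure_display) (Omega : measurableType dO)
  (R : realType) (d : nat) (X : Omega -> 'rV[R]_d) : Prop :=
  forall B, rV_borel B -> measurable (X @^-1` B).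

Definition rV_mutually_independent (dO : measure_display) (Omega : measurableType dO)
  (R : realType) (d : nat) (P : probability Omega R) (I : eqType)
  (X : I -> Omega -> 'rV[R]_d) : Prop :=
  forall (s : seq I) (B : I -> set 'rV[R]_d),
    uniq s -> (forall i, rV_borel (B i)) ->
    P (\bigcap_(i in [set j | j \in s]) (X i @^-1` B i)) =
    (\prod_(i <- s) P (X i @^-1` B i))%E.

Definition rV_identically_distributed (dO : measure_display) (Omega : measurableType dO)
  (R : realType) (d : nat) (P : probability Omega R) (I : Type)
  (X : I -> Omega -> 'rV[R]_d) : Prop :=
  forall i j B, rV_borel B -> P (X i @^-1` B) = P (X j @^-1` B).

From HB Require Import structures.
From mathcomp Require Import all_boot all_order all_algebra.
From mathcomp Require Import all_classical all_reals all_analysis.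
From mathcomp Require Import ring lra.
Import Order.TTheory GRing.Theory Num.Theory.
Import numFieldNormedType.Exports.
Local Open Scope classical_set_scope.
Local Open Scope ring_scope.

(** For the quadratic loss the gradient is [kappa *: (theta - x)], so one step
    of the iteration reads [Theta_n = (1 - a) Theta_(n-1) + a * (batch mean)]
    with [a = kappa * gamma].  With [S] the supremum of the sample norms this
    gives [|Theta_n| <= r |Theta_(n-1)| + a S] for [r = |1 - a| < 1], and the
    series defining [Theta_0] gives [|Theta_0| <= a S / (1 - r)], the fixed
    point of that recursion, so the bound propagates to every [n].  Finally
    [a / (1 - |1 - a|) <= 2 / (2 - a)] for [0 < a < 2]. *)

Section Scalars.
Context {R : realFieldType}.

Lemma geometric_sum_le (r : R) (N : nat) : 0 <= r < 1 ->
  \sum_(0 <= n < N) r ^+ n <= (1 - r)^-1.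
Proof.
move=> /andP[r_ge0 r_lt1]; have r1_gt0 : 0 < 1 - r by rewrite subr_gt0.
have := subrXX 1 r N; rewrite expr1n; under eq_bigr do rewrite expr1n mul1r.
rewrite big_mkord => sumE.
by rewrite -[leRHS]mulr1 ler_pdivlMl // -sumE lerBlDr lerDl exprn_ge0.
Qed.

Lemma affine_recursion_le (x : nat -> R) (r c : R) : 0 <= r < 1 ->
  (forall n, x n.+1 <= r * x n + c) -> x 0%N <= c / (1 - r) ->
  forall n, x n <= c / (1 - r).
Proof.
move=> /andP[r_ge0 r_lt1] x_step x0_le; elim=> // n IH.
apply: le_trans (x_step n) _.
rewrite [leRHS](_ : _ = r * (c / (1 - r)) + c); first by rewrite lerD2r ler_wpM2l.
by field; rewrite subr_eq0 eq_sym lt_eqF.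
Qed.

Lemma contraction_factor_le (a : R) : 0 < a < 2 ->
  a / (1 - `|1 - a|) <= 2 / (2 - a).
Proof.
move=> /andP[a_gt0 a_lt2]; have a2_gt0 : 0 < 2 - a by rewrite subr_gt0.
have [a_le1|a_gt1] := leP a 1.
  rewrite ger0_norm ?subr_ge0 // opprB addrCA subrr addr0 divff ?gt_eqF //.
  by rewrite ler_pdivlMr // mul1r lerBlDr lerDl ltW.
have -> : 1 - `|1 - a| = 2 - a by rewrite ler0_norm ?subr_le0 ?(ltW a_gt1) //; ring.
by rewrite ler_pM2r ?invr_gt0 // ltW.
Qed.

Lemma sqrrD_le_weighted (a b : R) {t : R} : 0 < t ->
  (a + b) ^+ 2 <= (1 + t) * a ^+ 2 + (1 + t^-1) * b ^+ 2.
Proof.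
move=> t_gt0; rewrite -subr_ge0.
have -> : (1 + t) * a ^+ 2 + (1 + t^-1) * b ^+ 2 - (a + b) ^+ 2
    = t^-1 * (t * a - b) ^+ 2 by field; rewrite gt_eqF.
by rewrite mulr_ge0 ?sqr_ge0 ?invr_ge0 ?ltW.
Qed.

End Scalars.

Section EuclideanNorm.
Context {R : realType} {d : nat}.
Implicit Types (u v : 'rV[R]_d).

Lemma enorm_ge0 v : 0 <= enorm v.
Proof. exact: sqrtr_ge0. Qed.

Lemma enorm_sqr v : enorm v ^+ 2 = \sum_(i < d) v 0 i ^+ 2.
Proof. by rewrite sqr_sqrtr // sumr_ge0 // => i _; rewrite sqr_ge0. Qed.

Lemma enormZ (c : R) v : enorm (c *: v) = `|c| * enorm v.
Proof.
rewrite /enorm -sqrtr_sqr -sqrtrM ?sqr_ge0 // mulr_sumr.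
by congr Num.sqrt; apply: eq_bigr => i _; rewrite mxE exprMn.
Qed.

Lemma enorm0 : enorm (0 : 'rV[R]_d) = 0.
Proof. by rewrite -(scale0r 0) enormZ normr0 mul0r. Qed.

Lemma enorm_gt0 v : (0 < enorm v) = (v != 0).
Proof.
apply/idP/idP; first by apply: contraTN => /eqP ->; rewrite enorm0 ltxx.
apply: contraNT; rewrite -leNgt => v_le0; apply/eqP/rowP => i; rewrite mxE.
have : enorm v ^+ 2 == 0 by rewrite sqrf_eq0 eq_le v_le0 enorm_ge0.
rewrite enorm_sqr psumr_eq0 => [/allP/(_ i (mem_index_enum i))|j _].
  by rewrite sqrf_eq0 => /eqP.
exact: sqr_ge0.
Qed.

Lemma enormD u v : enorm (u + v) <= enorm u + enorm v.
Proof.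
have [->|u0] := eqVneq u 0; first by rewrite add0r enorm0 add0r.
have [->|v0] := eqVneq v 0; first by rewrite addr0 enorm0 addr0.
have p_gt0 : 0 < enorm u by rewrite enorm_gt0.
have q_gt0 : 0 < enorm v by rewrite enorm_gt0.
set p := enorm u in p_gt0 *; set q := enorm v in q_gt0 *.
rewrite -(ler_pXn2r (n := 2)) ?nnegrE ?addr_ge0 ?enorm_ge0 // enorm_sqr.
(* With [t = q / p] the weighted bound sums to exactly [(p + q) ^+ 2]. *)
have t_gt0 : 0 < q / p by rewrite divr_gt0.
under eq_bigr do rewrite mxE.
apply: le_trans (ler_sum _ (fun i _ => sqrrD_le_weighted (u 0 i) (v 0 i) t_gt0)) _.
rewrite big_split /= -!mulr_sumr -!enorm_sqr -/p -/q invf_div.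
by rewrite [leLHS](_ : _ = (p + q) ^+ 2) //; field; rewrite !gt_eqF.
Qed.

Lemma enorm_sum {I : Type} (r : seq I) (F : I -> 'rV[R]_d) :
  enorm (\sum_(i <- r) F i) <= \sum_(i <- r) enorm (F i).
Proof.
elim: r => [|i r IH]; first by rewrite !big_nil enorm0.
by rewrite !big_cons; apply: le_trans (enormD _ _) _; rewrite lerD2l.
Qed.

Lemma enorm_continuous : continuous (@enorm R d).
Proof.
move=> v; apply: (continuous_comp (f := fun v : 'rV[R]_d => \sum_i v 0 i ^+ 2)).
  apply: continuous_big => [|i _ u]; first exact: add_continuous.
  apply: (continuous_comp (f := fun x : 'rV[R]_d => x 0 i) (g := fun y => y ^+ 2)).
    exact: coord_continuous.
  exact: exprn_continuous.
exact: sqrt_continuous.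
Qed.

Lemma sqr_enormD_delta (v : 'rV[R]_d) (h : R) i :
  enorm (v + h *: delta_mx 0 i) ^+ 2 = enorm v ^+ 2 + (2 * v 0 i + h) * h.
Proof.
rewrite !enorm_sqr (bigD1 i) //= [in RHS](bigD1 i) //= !mxE /= eqxx mulr1.
under eq_bigr => j ji do rewrite !mxE (negPf ji) andbF mulr0 addr0.
ring.
Qed.

Lemma derive_quadratic (c : R) (x a : 'rV[R]_d) i :
  derive (fun t => c * enorm (t - x) ^+ 2) a (delta_mx 0 i) = 2 * c * (a - x) 0 i.
Proof.
rewrite /derive; apply: cvg_lim => //.
have affine_cvg : (fun h : R => 2 * c * (a - x) 0 i + c * h) @ 0^' -->
    2 * c * (a - x) 0 i.
  have : (fun h : R => 2 * c * (a - x) 0 i + c * h) @ 0 -->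
      2 * c * (a - x) 0 i + c * 0.
    by apply: cvgD; [exact: cvg_cst | apply: cvgMr; exact: cvg_id].
  by rewrite mulr0 addr0; exact: cvg_within_filter.
apply: cvg_trans affine_cvg; apply: near_eq_cvg; near=> h.
have h_neq0 : h != 0 by near: h; exact: nbhs_dnbhs_neq.
rewrite /= -addrA addrC sqr_enormD_delta.
by rewrite /GRing.scale /=; field.
Unshelve. all: by end_near.
Qed.

Lemma enorm_mean_le (p M : nat) (Y : nat -> 'rV[R]_d) (S : R) : (0 < M)%N ->
  (forall m, enorm (Y m) <= S) -> enorm (M%:R^-1 *: \sum_(p <= m < p + M) Y m) <= S.
Proof.
move=> M_gt0 Y_le; rewrite enormZ ger0_norm ?invr_ge0 // ler_pdivrMl ?ltr0n //.
apply: le_trans (enorm_sum _ _) _.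
by rewrite -[in leRHS](addKn p M) mulr_natl -sumr_const_nat ler_sum.
Qed.

Lemma enorm_series_le (c : nat -> 'rV[R]_d) (L : 'rV[R]_d) (C r : R) :
  0 <= r < 1 -> (forall n, enorm (c n) <= C * r ^+ n) ->
  (fun N => \sum_(0 <= n < N) c n) @ \oo --> L -> enorm L <= C / (1 - r).
Proof.
move=> r01 c_le c_cvg.
have C_ge0 : 0 <= C.
  by have := c_le 0%N; rewrite expr0 mulr1; exact: le_trans (enorm_ge0 _).
apply: (cvgr_to_le (continuous_cvg _ (@enorm_continuous L) c_cvg)); near=> N.
apply: le_trans (enorm_sum _ _) _; apply: le_trans (ler_sum _ (fun n _ => c_le n)) _.
by rewrite -mulr_sumr ler_wpM2l // geometric_sum_le.
Unshelve. all: by end_near.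
Qed.

Lemma gradient_step_quadratic (kappa gamma : R) (p M : nat) (th : 'rV[R]_d)
    (Y : nat -> 'rV[R]_d) : (0 < M)%N ->
  th - (gamma / M%:R) *: \sum_(p <= m < p + M) kappa *: (th - Y m)
  = (1 - kappa * gamma) *: th + (kappa * gamma) *: (M%:R^-1 *: \sum_(p <= m < p + M) Y m).
Proof.
move=> M_gt0; rewrite -scaler_sumr sumrB sumr_const_nat addKn -[th *+ M]scaler_nat.
apply/rowP => j; rewrite !mxE.
by field; rewrite pnatr_eq0 -lt0n.
Qed.

Lemma grad1_quadratic {kappa : R} {l : 'rV[R]_d -> 'rV[R]_d -> R} :
  (forall th x, l th x = kappa / 2 * enorm (th - x) ^+ 2) ->
  forall th x, grad1 l th x = kappa *: (th - x).
Proof.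
move=> lE th x; apply/rowP => i; rewrite /grad1 /gradient !mxE.
rewrite (_ : (fun t => l t x) = fun t => kappa / 2 * enorm (t - x) ^+ 2).
  by rewrite derive_quadratic !mxE; field.
by apply/funext => t; exact: lE.
Qed.

End EuclideanNorm.

Lemma ereal_sup_le_mul_sup {R : realType} {I J : Type} (f : I -> R) (g : J -> R)
    (c : R) (j0 : J) :
  (forall j, 0 <= g j) -> (ereal_sup (range (fun j => (g j)%:E)) < +oo)%E ->
  (forall S, 0 <= S -> (forall j, g j <= S) -> forall i, f i <= c * S) ->
  (ereal_sup (range (fun i => (f i)%:E)) <=
   c%:E * ereal_sup (range (fun j => (g j)%:E)))%E.
Proof.
move=> g_ge0 g_sup_lt f_le.
have sup_ge0 : (0 <= ereal_sup (range (fun j => (g j)%:E)))%E.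
  apply: le_trans (ereal_sup_ubound _); last by exists j0.
  by rewrite lee_fin g_ge0.
have /fineK supE : ereal_sup (range (fun j => (g j)%:E)) \is a fin_num.
  by rewrite ge0_fin_numE.
rewrite -supE -EFinM; apply: ge_ereal_sup => _ [i _ <-]; rewrite lee_fin.
apply: f_le => [|j]; first by rewrite -lee_fin supE.
by rewrite -lee_fin supE; apply: ereal_sup_ubound; exists j.
Qed.

Theorem lemma5p4 (R : realType) (d : nat) (kappa : R)
  (l : 'rV[R]_d -> 'rV[R]_d -> R)
  (dO : measure_display) (Omega : measurableType dO) (P : probability Omega R)
  (X : int -> int -> Omega -> 'rV[R]_d)
  (M : nat) (gamma : R) (Theta : nat -> Omega -> 'rV[R]_d) (k : int) :
  (0 < d)%N ->
  0 < kappa ->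
  (forall theta vartheta, l theta vartheta = kappa / 2 * enorm (theta - vartheta) ^+ 2) ->
  (forall n m, rV_random_variable (X n m)) ->
  rV_mutually_independent P (fun p : int * int => X p.1 p.2) ->
  rV_identically_distributed P (fun p : int * int => X p.1 p.2) ->
  (forall w, (ereal_sup [set (enorm (X p.1 p.2 w))%:E | p in [set: int * int]]
               < +oo)%E) ->
  (0 < M)%N ->
  0 < gamma < 2 / kappa ->
  (forall (n : nat) w, Theta n.+1 w =
      Theta n w - (gamma / M%:R) *:
        \sum_(1 <= m < M.+1) grad1 l (Theta n w) (X (Posz n.+1) (Posz m) w)) ->
  (forall w,
      (fun N : nat => \sum_(0 <= n < N)
          ((kappa * gamma * (1 - kappa * gamma) ^+ n / M%:R) *:
             \sum_(0 <= i < M) X (- Posz n) (k + Posz i.+1) w))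
        @ \oo --> Theta 0%N w) ->
  forall w,
    (ereal_sup (range (fun n : nat => (enorm (Theta n w))%:E)) <=
     (2 / (2 - kappa * gamma))%:E *
       ereal_sup [set (enorm (X p.1 p.2 w))%:E | p in [set: int * int]])%E.
Proof.
move=> _ kappa_gt0 lE _ _ _ X_sup_fin M_gt0 /andP[gamma_gt0 gamma_lt].
move=> Theta_step Theta0_cvg w.
apply: (ereal_sup_le_mul_sup (fun n => enorm (Theta n w)) (fun p => enorm (X p.1 p.2 w))
          _ (0, 0)) => // [p|S S_ge0 X_le n]; first exact: enorm_ge0.
have {}X_le p q : enorm (X p q w) <= S := X_le (p, q).
set a := kappa * gamma; set r := `|1 - a|.
have a_gt0 : 0 < a by rewrite mulr_gt0.
have a_lt2 : a < 2 by move: gamma_lt; rewrite ltr_pdivlMr // mulrC.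
have r01 : 0 <= r < 1 by rewrite normr_ge0 ltr_norml; apply/andP; split; lra.
have Theta_le : enorm (Theta n w) <= a * S / (1 - r).
  apply: (affine_recursion_le (fun n => enorm (Theta n w)) _ _ r01) => [{}n|].
    rewrite Theta_step; under eq_bigr do rewrite (grad1_quadratic lE).
    rewrite (gradient_step_quadratic _ _ 1) //; apply: le_trans (enormD _ _) _.
    rewrite (enormZ (1 - a)) (enormZ a) -/r (gtr0_norm a_gt0) lerD2l.
    by rewrite ler_wpM2l ?(ltW a_gt0) //; exact: enorm_mean_le.
  apply: enorm_series_le (Theta0_cvg w) => // {}n.
  rewrite -scalerA enormZ normrM normrX (gtr0_norm a_gt0) -/r [leRHS]mulrAC.
  apply: ler_wpM2l; first by rewrite mulr_ge0 ?exprn_ge0 ?(ltW a_gt0) ?normr_ge0.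
  exact: (enorm_mean_le 0).
apply: le_trans Theta_le _; rewrite mulrAC ler_wpM2r //.
by apply: contraction_factor_le; rewrite a_gt0 a_lt2.
Qed.
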